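(* Let $(X,d)$ be a compact metric space, $f_{1,\infty}$ a sequence of continuous self-maps of $X$ and $m\ge2$. If $(\mathcal{M}(X),\widetilde{f}_{1,\infty})$ is weakly mixing of order $m$, then $(X,f_{1,\infty})$ is weakly mixing of order $m$.
   Context: For $f_{1,\infty}=\{f_n\}_{n\ge1}$ write $f_1^n=f_n\circ\cdots\circ f_1$. $\mathcal{M}(X)$ is the space of Borel probability measures on $X$ with the weak$^*$ topology, and $\widetilde{f}_1^n(\mu)(A)=\mu((f_1^n)^{-1}(A))$ for Borel $A$. A non-autonomous system $(Y,g_{1,\infty})$ is weakly mixing of order $m$ ($m\ge2$) if for any non-empty open sets $U_1,\dots,U_m,V_1,\dots,V_m\subseteq Y$ there is $n\in\mathbb{N}$ with $g_1^n(U_i)\cap V_i\neq\emptyset$ for all $1\le i\le m$. *)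

From Stdlib Require Import Reals Lra Classical.
Open Scope R_scope.

Set Implicit Arguments.

Section Topo.
Variable X : Metric_Space.
Let T := Base X.

Definition ball (x : T) (r : R) : T -> Prop := fun y => dist X x y < r.

Definition mopen (U : T -> Prop) : Prop :=
  forall x, U x -> exists r, r > 0 /\ forall y, ball x r y -> U y.

Definition mcompact : Prop :=
  forall (I : Type) (C : I -> T -> Prop),
    (forall i, mopen (C i)) -> (forall x, exists i, C i x) ->
    exists l : list I, forall x, exists i, List.In i l /\ C i x.

Definition mcontinuous (f : T -> T) : Prop :=
  forall x eps, eps > 0 -> exists delta, delta > 0 /\
    forall y, dist X x y < delta -> dist X (f x) (f y) < eps.

Definition mcontinuous_R (g : T -> R) : Prop :=
  forall x eps, eps > 0 -> exists delta, delta > 0 /\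
    forall y, dist X x y < delta -> Rabs (g x - g y) < eps.

Definition sigma_algebra (S : (T -> Prop) -> Prop) : Prop :=
  S (fun _ => True) /\
  (forall A, S A -> S (fun x => ~ A x)) /\
  (forall A : nat -> T -> Prop, (forall n, S (A n)) -> S (fun x => exists n, A n x)).

Definition borel (A : T -> Prop) : Prop :=
  forall S, sigma_algebra S -> (forall O, mopen O -> S O) -> S A.

(** * Borel probability measures.  A measure is a set function whose values
    are only constrained on Borel sets (values on non-Borel sets are junk). *)
Definition is_borel_prob (mu : (T -> Prop) -> R) : Prop :=
  (forall A, borel A -> 0 <= mu A) /\
  mu (fun _ => True) = 1 /\
  (forall A : nat -> T -> Prop,
     (forall n, borel (A n)) ->
     (forall n k x, n <> k -> A n x -> A k x -> False) ->
     infinite_sum (fun n => mu (A n)) (mu (fun x => exists n, A n x))).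

Definition ProbMeasure := { mu : (T -> Prop) -> R | is_borel_prob mu }.

(** * Lebesgue integral of a bounded function, as the limit of Lebesgue
    (lower) sums over the partition of the range [-M, M) into intervals of
    length 1/(N+1). *)
Definition lebesgue_sum (mu : (T -> Prop) -> R) (g : T -> R) (M N : nat) : R :=
  let h := / INR (S N) in
  sum_f_R0 (fun k =>
      (- INR M + INR k * h) *
      mu (fun x => - INR M + INR k * h <= g x /\ g x < - INR M + INR (S k) * h))
    (2 * M * S N - 1)%nat.

Definition integral (mu : (T -> Prop) -> R) (g : T -> R) (L : R) : Prop :=
  exists M : nat, (forall x, Rabs (g x) < INR M) /\
    Un_cv (fun N => lebesgue_sum mu g M N) L.

(** * Weak* topology on M(X): the coarsest topology making
    mu |-> \int g dmu continuous for every continuous g : X -> R. *)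
Definition wstar_open (O : ProbMeasure -> Prop) : Prop :=
  forall mu : ProbMeasure, O mu ->
    exists (k : nat) (g : nat -> T -> R) (eps : R),
      eps > 0 /\ (forall i, (i < k)%nat -> mcontinuous_R (g i)) /\
      forall nu : ProbMeasure,
        (forall i, (i < k)%nat -> forall a b,
            integral (proj1_sig mu) (g i) a -> integral (proj1_sig nu) (g i) b ->
            Rabs (a - b) < eps) ->
        O nu.

Lemma mopen_preimage (f : T -> T) (O : T -> Prop) :
  mcontinuous f -> mopen O -> mopen (fun x => O (f x)).
Proof.
  intros hf hO x Ox. destruct (hO _ Ox) as [r [hr hb]].
  destruct (hf x r hr) as [d [hd hd']]. exists d; split; [exact hd|].
  intros y hy. apply hb. apply hd'. exact hy.
Qed.

Lemma borel_preimage (f : T -> T) (A : T -> Prop) :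
  mcontinuous f -> borel A -> borel (fun x => A (f x)).
Proof.
  intros hf hA S [h1 [h2 h3]] hO.
  apply (hA (fun B => S (fun x => B (f x)))).
  - split; [exact h1|split].
    + intros B hB. exact (h2 _ hB).
    + intros B hB. exact (h3 (fun n x => B n (f x)) hB).
  - intros O hO'. apply hO. apply mopen_preimage; assumption.
Qed.

Lemma push_is_borel_prob (f : T -> T) (mu : (T -> Prop) -> R) :
  mcontinuous f -> is_borel_prob mu -> is_borel_prob (fun A => mu (fun x => A (f x))).
Proof.
  intros hf [h1 [h2 h3]]. split; [|split].
  - intros A hA. apply h1. apply borel_preimage; assumption.
  - exact h2.
  - intros A hA hd. apply (h3 (fun n x => A n (f x))).
    + intros n. apply borel_preimage; auto.
    + intros n k x hnk a b. exact (hd n k (f x) hnk a b).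
Qed.

Definition push (f : T -> T) (hf : mcontinuous f) (mu : ProbMeasure) : ProbMeasure :=
  exist _ (fun A => proj1_sig mu (fun x => A (f x)))
        (push_is_borel_prob hf (proj2_sig mu)).

End Topo.

Fixpoint comp_seq (Y : Type) (g : nat -> Y -> Y) (n : nat) (y : Y) : Y :=
  match n with
  | O => y
  | S k => g (S k) (comp_seq g k y)
  end.

Definition weakly_mixing_order (Y : Type) (isopen : (Y -> Prop) -> Prop)
    (g : nat -> Y -> Y) (m : nat) : Prop :=
  forall U V : nat -> Y -> Prop,
    (forall i, (1 <= i <= m)%nat ->
       isopen (U i) /\ isopen (V i) /\ (exists y, U i y) /\ (exists y, V i y)) ->
    exists n : nat, (1 <= n)%nat /\
      forall i, (1 <= i <= m)%nat -> exists y, U i y /\ V i (comp_seq g n y).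

(* Given an open set W, call a measure heavy on W if it integrates some continuous
   bump function 0 <= g <= 1 supported in W to more than 1/2.  These measures form a
   weak*-open set (integration against a fixed continuous g is weak*-continuous),
   nonempty when W is (it contains the Dirac mass at a point where g = 1), and every
   measure heavy on W gives mass > 1/2 to the Borel set {g > 0} contained in W.
   Weak mixing of the induced system applied to these sets yields nu heavy on U_i
   with (f_1^n)_* nu heavy on V_i; then U_i and (f_1^n)^{-1}(V_i) both contain sets
   of nu-mass > 1/2, so they meet.
   Since [integral] is a limit of lower Lebesgue sums, its existence has to be
   proved: every lower sum is below every upper sum, so the lower sums are Cauchy. *)

From Stdlib Require Import Reals Lra Lia Classical FunctionalExtensionality PropExtensionality ClassicalEpsilon.
Open Scope R_scope.

Lemma pred_ext {T : Type} (A B : T -> Prop) : (forall x, A x <-> B x) -> A = B.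
Proof.
  intro H. apply functional_extensionality; intro x.
  apply propositional_extensionality, H.
Qed.

Lemma infinite_sum_eventually_zero (s : nat -> R) (n : nat) :
  (forall j, (j > n)%nat -> s j = 0) -> infinite_sum s (sum_f_R0 s n).
Proof.
  intros H eps heps. exists n. intros N hN.
  replace (sum_f_R0 s N) with (sum_f_R0 s n).
  - unfold Rdist. rewrite Rminus_diag, Rabs_R0. lra.
  - replace N with (n + (N - n))%nat by lia.
    induction (N - n)%nat as [|d IH].
    + now rewrite Nat.add_0_r.
    + replace (n + S d)%nat with (S (n + d)) by lia.
      simpl. rewrite <- IH, H by lia. ring.
Qed.

Lemma infinite_sum_single (s : nat -> R) (n : nat) :
  (forall j, j <> n -> s j = 0) -> infinite_sum s (s n).
Proof.
  intro H. replace (s n) with (sum_f_R0 s n).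
  - apply infinite_sum_eventually_zero. intros j hj. apply H. lia.
  - destruct n as [|n]; simpl; [reflexivity|].
    rewrite sum_eq_R0 by (intros j hj; apply H; lia). ring.
Qed.

Lemma sum_f_R0_swap (a : nat -> nat -> R) (n m : nat) :
  sum_f_R0 (fun k => sum_f_R0 (fun j => a k j) m) n =
  sum_f_R0 (fun j => sum_f_R0 (fun k => a k j) n) m.
Proof.
  induction n as [|n IH]; simpl.
  - apply sum_eq. reflexivity.
  - rewrite IH, <- sum_plus. apply sum_eq. reflexivity.
Qed.

Lemma grid_cover (h : R) (K : nat) (y : R) : h > 0 -> 0 <= y -> y < INR K * h ->
  exists k, (k < K)%nat /\ INR k * h <= y /\ y < INR (S k) * h.
Proof.
  intros hh hy. induction K as [|K IH]; intro hK.
  - simpl in hK. lra.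
  - destruct (Rlt_le_dec y (INR K * h)) as [lt|le].
    + destruct (IH lt) as [k [? ?]]. exists k. split; [lia | assumption].
    + exists K. split; [lia | split; assumption].
Qed.

Lemma Rinv_INR_S_pos (N : nat) : / INR (S N) > 0.
Proof. apply Rinv_0_lt_compat, lt_0_INR. lia. Qed.

Lemma Rabs_Rmax0_sub_le (a b : R) : Rabs (Rmax 0 a - Rmax 0 b) <= Rabs (a - b).
Proof.
  unfold Rmax. destruct (Rle_dec 0 a), (Rle_dec 0 b);
    unfold Rabs; repeat destruct Rcase_abs; lra.
Qed.

Lemma Rinv_INR_S_le (N0 n : nat) : (0 < N0)%nat -> (N0 <= n)%nat -> / INR (S n) <= / INR N0.
Proof. intros h1 h2. apply Rinv_le_contravar; [apply lt_0_INR; lia | apply le_INR; lia]. Qed.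

Lemma Un_cv_le_const (u : nat -> R) (l c : R) : Un_cv u l -> (forall N, u N <= c) -> l <= c.
Proof.
  intros hu hc. destruct (Rle_lt_dec l c) as [l_le|c_lt]; [assumption|].
  destruct (hu (l - c)) as [N HN]; [lra|].
  specialize (HN N (le_n _)). specialize (hc N).
  unfold Rdist in HN. apply Rabs_def2 in HN. lra.
Qed.

Lemma Un_cv_ge_sub_inv (u : nat -> R) (l c : R) :
  Un_cv u l -> (forall N, c - / INR (S N) <= u N) -> c <= l.
Proof.
  intros hu hc. destruct (Rle_lt_dec c l) as [c_le|l_lt]; [assumption|].
  destruct (hu ((c - l) / 2)) as [N HN]; [lra|].
  destruct (archimed_cor1 ((c - l) / 2)) as [N0 [hN0 N0_pos]]; [lra|].
  set (n := Nat.max N N0).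
  specialize (HN n ltac:(unfold n; lia)). specialize (hc n).
  pose proof (Rinv_INR_S_le N0 n N0_pos ltac:(unfold n; lia)).
  unfold Rdist in HN. apply Rabs_def2 in HN. lra.
Qed.

Section Borel.

Context {X : Metric_Space}.
Local Notation T := (Base X).

Lemma borel_open (O : T -> Prop) : mopen X O -> borel X O.
Proof. intros hO S _ hop. exact (hop O hO). Qed.

Lemma borel_True : borel X (fun _ => True).
Proof. intros S [h _] _. exact h. Qed.

Lemma borel_compl {A : T -> Prop} : borel X A -> borel X (fun x => ~ A x).
Proof. intros hA S hS hO. apply (proj1 (proj2 hS)), hA; assumption. Qed.

Lemma borel_union {A B : T -> Prop} : borel X A -> borel X B -> borel X (fun x => A x \/ B x).
Proof.
  intros hA hB S hS hO. pose proof hS as [_ [_ h3]].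
  set (F := fun n : nat => match n with O => A | _ => B end).
  replace (fun x => A x \/ B x) with (fun x => exists n, F n x).
  - apply h3. intros [|n]; simpl; [apply hA | apply hB]; assumption.
  - apply pred_ext. intro x. split.
    + intros [[|n] H]; simpl in H; auto.
    + intros [H|H]; [exists O | exists 1%nat]; exact H.
Qed.

Lemma borel_ext (A B : T -> Prop) : (forall x, A x <-> B x) -> borel X A -> borel X B.
Proof. intros H. now rewrite (pred_ext A B H). Qed.

Lemma borel_inter {A B : T -> Prop} : borel X A -> borel X B -> borel X (fun x => A x /\ B x).
Proof.
  intros hA hB. apply (borel_ext (fun x => ~ (~ A x \/ ~ B x))).
  - intro x. tauto.
  - apply borel_compl, borel_union; apply borel_compl; assumption.
Qed.

Lemma borel_False : borel X (fun _ => False).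
Proof. apply (borel_ext (fun _ => ~ True)); [tauto | apply borel_compl, borel_True]. Qed.

Lemma mopen_lt (g : T -> R) (b : R) : mcontinuous_R X g -> mopen X (fun x => g x < b).
Proof.
  intros hg x hx. destruct (hg x (b - g x)) as [d [hd H]]; [lra|].
  exists d. split; [exact hd|]. intros y hy. specialize (H y hy).
  apply Rabs_def2 in H. lra.
Qed.

Lemma mopen_gt (g : T -> R) (b : R) : mcontinuous_R X g -> mopen X (fun x => b < g x).
Proof.
  intros hg x hx. destruct (hg x (g x - b)) as [d [hd H]]; [lra|].
  exists d. split; [exact hd|]. intros y hy. specialize (H y hy).
  apply Rabs_def2 in H. lra.
Qed.

End Borel.

Section Measure.

Context {X : Metric_Space}.
Local Notation T := (Base X).
Context {mu : (T -> Prop) -> R} (hmu : is_borel_prob X mu).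

Lemma borel_prob_ge0 {A : T -> Prop} : borel X A -> 0 <= mu A.
Proof. apply (proj1 hmu). Qed.

Lemma borel_prob_False : mu (fun _ => False) = 0.
Proof.
  destruct hmu as [_ [_ additive]].
  pose proof (additive (fun _ _ => False) (fun _ => borel_False) (fun _ _ _ _ a _ => a)) as H.
  cbv beta in H.
  replace (fun _ : T => exists _ : nat, False) with (fun _ : T => False) in H
    by (apply pred_ext; intro; split; [tauto | intros [_ a]; exact a]).
  set (c := mu (fun _ => False)) in *.
  (* the constant series [c + c + ...] converges to [c] only if [c = 0] *)
  destruct (Req_dec c 0) as [e|ne]; [exact e|].
  assert (hc : Rabs c > 0) by (apply Rabs_pos_lt, ne).
  destruct (H (Rabs c) hc) as [N HN].
  specialize (HN (S N) ltac:(lia)). rewrite sum_cte in HN. unfold Rdist in HN.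
  replace (c * INR (S (S N)) - c) with (c * INR (S N)) in HN by (rewrite (S_INR (S N)); ring).
  rewrite Rabs_mult, (Rabs_right (INR (S N))) in HN by (apply Rle_ge, pos_INR).
  assert (1 <= INR (S N)) by (rewrite S_INR; pose proof (pos_INR N); lra).
  nra.
Qed.

Lemma borel_prob_scale_le {A : T -> Prop} {a b : R} :
  borel X A -> (forall x, A x -> a <= b) -> a * mu A <= b * mu A.
Proof.
  intros hA hab. destruct (classic (exists x, A x)) as [[x Ax]|empty].
  - pose proof (borel_prob_ge0 hA). specialize (hab x Ax). nra.
  - replace A with (fun _ : T => False) by (apply pred_ext; firstorder).
    rewrite borel_prob_False. lra.
Qed.

Lemma borel_prob_finite_partition (C : T -> Prop) (B : nat -> T -> Prop) (n : nat) :
  borel X C ->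
  (forall j, (j <= n)%nat -> borel X (B j)) ->
  (forall j j' x, (j <= n)%nat -> (j' <= n)%nat -> j <> j' -> B j x -> B j' x -> False) ->
  (forall x, C x -> exists j, (j <= n)%nat /\ B j x) ->
  mu C = sum_f_R0 (fun j => mu (fun x => C x /\ B j x)) n.
Proof.
  intros hC hB disj cover.
  set (D := fun j x => (j <= n)%nat /\ C x /\ B j x).
  assert (D_empty : forall j, (j > n)%nat -> D j = fun _ => False).
  { intros j hj. apply pred_ext. intro x. unfold D. split; [lia | tauto]. }
  assert (hD : forall j, borel X (D j)).
  { intro j. destruct (Compare_dec.le_lt_dec j n) as [hj|hj].
    - apply (borel_ext (fun x => C x /\ B j x)); [unfold D; tauto|].
      apply borel_inter; auto.
    - rewrite D_empty by lia. apply borel_False. }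
  assert (D_disj : forall a b x, a <> b -> D a x -> D b x -> False).
  { intros a b x hab [ha [_ hx]] [hb [_ hy]]. eapply disj; eauto. }
  pose proof (proj2 (proj2 hmu) D hD D_disj) as H.
  replace (fun x => exists j, D j x) with C in H.
  2:{ apply pred_ext. intro x. split.
      - intro Cx. destruct (cover x Cx) as [j [hj Bx]]. exists j. unfold D. auto.
      - intros [j [_ [Cx _]]]. exact Cx. }
  replace (sum_f_R0 (fun j => mu (fun x => C x /\ B j x)) n) with (sum_f_R0 (fun j => mu (D j)) n).
  - apply (uniqueness_sum _ _ _ H). apply infinite_sum_eventually_zero.
    intros j hj. rewrite D_empty by lia. apply borel_prob_False.
  - apply sum_eq. intros j hj. f_equal. apply pred_ext. intro. unfold D. tauto.
Qed.

Lemma borel_prob_disjoint_le1 {A B : T -> Prop} :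
  borel X A -> borel X B -> (forall x, A x -> B x -> False) -> mu A + mu B <= 1.
Proof.
  intros hA hB disj.
  set (rest := fun x => ~ (A x \/ B x)).
  assert (hrest : borel X rest) by (apply borel_compl, borel_union; assumption).
  set (F := fun n : nat => match n with 0%nat => A | 1%nat => B | _ => rest end).
  pose proof (borel_prob_finite_partition (fun _ => True) F 2 borel_True) as P.
  rewrite (proj1 (proj2 hmu)) in P. simpl in P.
  replace (fun x => True /\ A x) with A in P by (apply pred_ext; tauto).
  replace (fun x => True /\ B x) with B in P by (apply pred_ext; tauto).
  replace (fun x => True /\ rest x) with rest in P by (apply pred_ext; tauto).
  pose proof (borel_prob_ge0 hrest).
  enough (1 = mu A + mu B + mu rest) by lra.
  apply P.
  - intros [|[|[|j]]] hj; simpl; assumption || lia.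
  - intros [|[|[|j]]] [|[|[|j']]] x h1 h2 h3; simpl; unfold rest; try lia; try tauto; eauto.
  - intros x _. destruct (classic (A x)); [exists 0%nat|].
    + simpl; split; [lia | assumption].
    + destruct (classic (B x)); [exists 1%nat | exists 2%nat]; simpl; split; unfold rest; auto; tauto.
Qed.

Lemma borel_prob_gt_half_meet {A B : T -> Prop} :
  borel X A -> borel X B -> 1/2 < mu A -> 1/2 < mu B -> exists x, A x /\ B x.
Proof.
  intros hA hB mA mB. apply NNPP. intro disj.
  pose proof (borel_prob_disjoint_le1 hA hB (fun x a b => disj (ex_intro _ x (conj a b)))).
  lra.
Qed.

End Measure.

Section Dirac.

Context {X : Metric_Space}.
Local Notation T := (Base X).

Definition dirac (x0 : T) : (T -> Prop) -> R :=
  fun A => if excluded_middle_informative (A x0) then 1 else 0.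

Lemma dirac_in (x0 : T) (A : T -> Prop) : A x0 -> dirac x0 A = 1.
Proof. intro h. unfold dirac. destruct excluded_middle_informative; tauto. Qed.

Lemma dirac_out (x0 : T) (A : T -> Prop) : ~ A x0 -> dirac x0 A = 0.
Proof. intro h. unfold dirac. destruct excluded_middle_informative; tauto. Qed.

Lemma dirac_is_borel_prob (x0 : T) : is_borel_prob X (dirac x0).
Proof.
  split; [|split].
  - intros A _. unfold dirac. destruct excluded_middle_informative; lra.
  - now apply dirac_in.
  - intros A _ disj.
    destruct (classic (exists n, A n x0)) as [[n0 h]|none].
    + rewrite (dirac_in x0 _ (ex_intro _ n0 h)), <- (dirac_in x0 _ h).
      apply (infinite_sum_single (fun n => dirac x0 (A n))). intros j hj. apply dirac_out.
      intro a. exact (disj j n0 x0 hj a h).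
    + rewrite (dirac_out x0 _ none), <- (dirac_out x0 (A 0%nat)) by firstorder.
      apply (infinite_sum_single (fun n => dirac x0 (A n))). intros j _. apply dirac_out.
      firstorder.
Qed.

End Dirac.

Definition grid (M N k : nat) : R := - INR M + INR k * / INR (S N).

Lemma grid_S (M N k : nat) : grid M N (S k) = grid M N k + / INR (S N).
Proof. unfold grid. rewrite S_INR. ring. Qed.

Section LebesgueSums.

Context {X : Metric_Space}.
Local Notation T := (Base X).
Variables (g : T -> R) (M : nat).
Hypothesis hg : mcontinuous_R X g.
Hypothesis hM : forall x, Rabs (g x) < INR M.

Definition cell (N k : nat) : T -> Prop := fun x => grid M N k <= g x /\ g x < grid M N (S k).

Lemma lebesgue_sum_cells (mu : (T -> Prop) -> R) (N : nat) :
  lebesgue_sum X mu g M N = sum_f_R0 (fun k => grid M N k * mu (cell N k)) (2 * M * S N - 1).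
Proof. reflexivity. Qed.

Lemma borel_cell (N k : nat) : borel X (cell N k).
Proof.
  apply borel_inter.
  - apply (borel_ext (fun x => ~ (g x < grid M N k))).
    + intro x. split; [apply Rnot_lt_le | apply Rle_not_lt].
    + apply borel_compl, borel_open, mopen_lt, hg.
  - apply borel_open, mopen_lt, hg.
Qed.

Lemma cell_disjoint (N j j' : nat) (x : T) : j <> j' -> cell N j x -> cell N j' x -> False.
Proof.
  intros hjj' [lo hi] [lo' hi'].
  assert (mono : forall a b, (a <= b)%nat -> grid M N a <= grid M N b).
  { intros a b hab. unfold grid. apply Rplus_le_compat_l, Rmult_le_compat_r.
    - apply Rlt_le, Rinv_INR_S_pos.
    - apply le_INR, hab. }
  destruct (Nat.lt_gt_cases j j') as [[lt|lt] _]; [exact hjj'| |].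
  - pose proof (mono (S j) j' lt). lra.
  - pose proof (mono (S j') j lt). lra.
Qed.

Lemma cell_cover (N : nat) (x : T) : exists k, (k <= 2 * M * S N - 1)%nat /\ cell N k x.
Proof.
  pose proof (hM x) as hx. apply Rabs_def2 in hx.
  destruct (grid_cover (/ INR (S N)) (2 * M * S N) (g x + INR M) (Rinv_INR_S_pos N)) as [k [hk [lo hi]]];
    [lra| |].
  - rewrite !mult_INR. replace (INR 2) with 2 by (simpl; lra).
    field_simplify; [lra | apply not_0_INR; lia].
  - exists k. split; [lia|]. unfold cell, grid. lra.
Qed.

Section Mass.

Context {mu : (T -> Prop) -> R} (hmu : is_borel_prob X mu).

Lemma borel_prob_split_cells (N : nat) (C : T -> Prop) : borel X C ->
  mu C = sum_f_R0 (fun k => mu (fun x => C x /\ cell N k x)) (2 * M * S N - 1).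
Proof.
  intro hC. apply borel_prob_finite_partition; [assumption..| | |].
  - intros. apply borel_cell.
  - intros j j' x _ _. apply cell_disjoint.
  - intros x _. apply cell_cover.
Qed.

Lemma sum_cell_masses (N : nat) : sum_f_R0 (fun k => mu (cell N k)) (2 * M * S N - 1) = 1.
Proof.
  rewrite <- (proj1 (proj2 hmu)), (borel_prob_split_cells N _ borel_True).
  apply sum_eq. intros k _. f_equal. apply pred_ext. tauto.
Qed.

Lemma lebesgue_sum_upper (N : nat) :
  sum_f_R0 (fun k => grid M N (S k) * mu (cell N k)) (2 * M * S N - 1) =
  lebesgue_sum X mu g M N + / INR (S N).
Proof.
  rewrite lebesgue_sum_cells, <- (Rmult_1_r (/ INR (S N))), <- (sum_cell_masses N),
    scal_sum, <- sum_plus.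
  apply sum_eq. intros k _. rewrite grid_S. ring.
Qed.

(* On the intersection of [cell N k] and [cell N' j], the lower grid value of the
   first cell is below the upper grid value of the second. *)
Lemma lebesgue_sum_le_upper (N N' : nat) :
  lebesgue_sum X mu g M N <= lebesgue_sum X mu g M N' + / INR (S N').
Proof.
  rewrite <- lebesgue_sum_upper, lebesgue_sum_cells.
  set (K := (2 * M * S N - 1)%nat). set (K' := (2 * M * S N' - 1)%nat).
  transitivity (sum_f_R0 (fun k => sum_f_R0 (fun j =>
    grid M N' (S j) * mu (fun x => cell N k x /\ cell N' j x)) K') K).
  - apply sum_Rle. intros k _.
    rewrite (borel_prob_split_cells N' _ (borel_cell N k)), scal_sum.
    apply sum_Rle. intros j _. rewrite Rmult_comm.
    apply (borel_prob_scale_le hmu); [apply borel_inter; apply borel_cell|].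
    intros x [[lo _] [_ hi]]. lra.
  - right. rewrite sum_f_R0_swap. apply sum_eq. intros j _.
    rewrite (borel_prob_split_cells N _ (borel_cell N' j)), scal_sum.
    apply sum_eq. intros k _. rewrite Rmult_comm. do 2 f_equal.
    apply pred_ext. tauto.
Qed.

Lemma integral_exists : exists L, integral X mu g L.
Proof.
  assert (cauchy : Cauchy_crit (fun N => lebesgue_sum X mu g M N)).
  { intros eps heps. destruct (archimed_cor1 eps heps) as [N0 [hN0 N0_pos]]. exists N0.
    intros n n' hn hn'. unfold Rdist.
    pose proof (lebesgue_sum_le_upper n n'). pose proof (lebesgue_sum_le_upper n' n).
    pose proof (Rinv_INR_S_le N0 n N0_pos hn). pose proof (Rinv_INR_S_le N0 n' N0_pos hn').
    apply Rabs_def1; lra. }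
  destruct (R_complete _ cauchy) as [L HL]. exists L, M. split; assumption.
Qed.

Lemma lebesgue_sum_le_mass_pos (N : nat) : (forall x, 0 <= g x <= 1) ->
  lebesgue_sum X mu g M N <= mu (fun x => 0 < g x).
Proof.
  intro g01. assert (hpos : borel X (fun x => 0 < g x)) by apply borel_open, mopen_gt, hg.
  rewrite lebesgue_sum_cells, (borel_prob_split_cells N _ hpos).
  apply sum_Rle. intros k _.
  pose proof (borel_prob_ge0 hmu (borel_inter hpos (borel_cell N k))).
  destruct (Rle_lt_dec (grid M N k) 0) as [nonpos|pos].
  - pose proof (borel_prob_ge0 hmu (borel_cell N k)). nra.
  - replace (fun x => 0 < g x /\ cell N k x) with (cell N k).
    2:{ apply pred_ext. intro x. split; [|tauto]. intros [lo hi]. split; [lra | split; assumption]. }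
    rewrite <- (Rmult_1_l (mu (cell N k))) at 2.
    apply (borel_prob_scale_le hmu (borel_cell N k)). intros x [lo _]. pose proof (g01 x). lra.
Qed.

End Mass.

Lemma lebesgue_sum_dirac_ge (x0 : T) (N : nat) :
  g x0 - / INR (S N) <= lebesgue_sum X (dirac x0) g M N.
Proof.
  rewrite lebesgue_sum_cells, <- (Rmult_1_r (g x0 - _)),
    <- (sum_cell_masses (dirac_is_borel_prob x0) N), scal_sum.
  apply sum_Rle. intros k _.
  destruct (classic (cell N k x0)) as [[lo hi]|out].
  - rewrite dirac_in by (split; assumption). rewrite grid_S in hi. lra.
  - rewrite dirac_out by exact out. lra.
Qed.

End LebesgueSums.

Section Bumps.

Context {X : Metric_Space}.
Local Notation T := (Base X).

Lemma integral_le_mass_pos {mu : (T -> Prop) -> R} {g : T -> R} {a : R} :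
  is_borel_prob X mu -> mcontinuous_R X g -> (forall x, 0 <= g x <= 1) ->
  integral X mu g a -> a <= mu (fun x => 0 < g x).
Proof.
  intros hmu hg g01 [M [hM hL]]. apply (Un_cv_le_const _ _ _ hL). intro N.
  exact (lebesgue_sum_le_mass_pos g M hg hM hmu N g01).
Qed.

Definition bump (W : T -> Prop) (g : T -> R) : Prop :=
  mcontinuous_R X g /\ (forall x, 0 <= g x <= 1) /\ (forall x, 0 < g x -> W x).

Lemma bump_bound {W : T -> Prop} {g : T -> R} : bump W g -> forall x, Rabs (g x) < INR 2.
Proof.
  intros [_ [g01 _]] x. specialize (g01 x). rewrite Rabs_right by lra. simpl. lra.
Qed.

Lemma tent_continuous (x0 : T) (r : R) : r > 0 ->
  mcontinuous_R X (fun x => Rmax 0 (1 - dist X x0 x / r)).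
Proof.
  intros hr x eps heps. exists (eps * r). split; [nra|]. intros y hy.
  eapply Rle_lt_trans; [apply Rabs_Rmax0_sub_le|].
  replace (1 - dist X x0 x / r - (1 - dist X x0 y / r)) with ((dist X x0 y - dist X x0 x) / r)
    by (field; lra).
  unfold Rdiv. rewrite Rabs_mult, (Rabs_right (/ r)) by (apply Rle_ge, Rlt_le, Rinv_0_lt_compat; lra).
  apply (Rmult_lt_reg_r r); [lra|]. rewrite Rmult_assoc, Rinv_l, Rmult_1_r by lra.
  pose proof (dist_tri X x0 y x). pose proof (dist_tri X x0 x y). pose proof (dist_sym X x y).
  apply Rle_lt_trans with (dist X x y); [apply Rabs_le|]; lra.
Qed.

Lemma exists_bump_at {W : T -> Prop} {x0 : T} : mopen X W -> W x0 ->
  exists g, bump W g /\ g x0 = 1.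
Proof.
  intros hW Wx0. destruct (hW x0 Wx0) as [r [hr ball_W]].
  exists (fun x => Rmax 0 (1 - dist X x0 x / r)).
  assert (dist_div_ge0 : forall x, 0 <= dist X x0 x / r).
  { intro x. pose proof (dist_pos X x0 x). unfold Rdiv. apply Rmult_le_pos; [lra | apply Rlt_le, Rinv_0_lt_compat, hr]. }
  split; [split; [|split]|].
  - apply tent_continuous, hr.
  - intro x. specialize (dist_div_ge0 x). split; [apply Rmax_l | apply Rmax_lub; lra].
  - intros x pos. apply ball_W. unfold ball.
    unfold Rmax in pos. destruct Rle_dec; [|lra].
    apply (Rmult_lt_reg_r (/ r)); [apply Rinv_0_lt_compat, hr|].
    rewrite Rinv_r by lra. unfold Rdiv in pos. lra.
  - rewrite (proj2 (dist_refl X x0 x0) eq_refl). unfold Rdiv.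
    rewrite Rmult_0_l, Rminus_0_r. apply Rmax_right. lra.
Qed.

Definition heavy_on (W : T -> Prop) (nu : ProbMeasure X) : Prop :=
  exists g, bump W g /\ exists a, integral X (proj1_sig nu) g a /\ 1/2 < a.

Lemma wstar_open_heavy_on (W : T -> Prop) : wstar_open (heavy_on W).
Proof.
  intros mu [g [hg [a [ha a_gt]]]]. exists 1%nat, (fun _ => g), (a - 1/2).
  split; [lra|split].
  - intros. apply hg.
  - intros nu close. exists g. split; [exact hg|].
    destruct (integral_exists g 2 (proj1 hg) (bump_bound hg) (proj2_sig nu)) as [b hb].
    exists b. split; [exact hb|].
    specialize (close 0%nat ltac:(lia) a b ha hb). apply Rabs_def2 in close. lra.
Qed.

Lemma heavy_on_dirac (W : T -> Prop) (x0 : T) : mopen X W -> W x0 ->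
  heavy_on W (exist _ (dirac x0) (dirac_is_borel_prob x0)).
Proof.
  intros hW Wx0. destruct (exists_bump_at hW Wx0) as [g [hg gx0]].
  exists g. split; [exact hg|]. simpl.
  destruct (integral_exists g 2 (proj1 hg) (bump_bound hg) (dirac_is_borel_prob x0)) as [a ha].
  exists a. split; [exact ha|].
  destruct ha as [M [hM hL]].
  enough (1 <= a) by lra.
  apply (Un_cv_ge_sub_inv _ _ _ hL). intro N. rewrite <- gx0.
  exact (lebesgue_sum_dirac_ge g M (proj1 hg) hM x0 N).
Qed.

Lemma heavy_on_mass {W : T -> Prop} {nu : ProbMeasure X} : heavy_on W nu ->
  exists B, borel X B /\ (forall x, B x -> W x) /\ 1/2 < proj1_sig nu B.
Proof.
  intros [g [[hg [g01 supp]] [a [ha a_gt]]]].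
  exists (fun x => 0 < g x). split; [|split].
  - apply borel_open, mopen_gt, hg.
  - exact supp.
  - pose proof (integral_le_mass_pos (proj2_sig nu) hg g01 ha). lra.
Qed.

End Bumps.

Section Iterates.

Context {X : Metric_Space} {f : nat -> Base X -> Base X} (hf : forall n, mcontinuous X (f n)).

Lemma push_iter_apply (n : nat) (nu : ProbMeasure X) (A : Base X -> Prop) :
  proj1_sig (comp_seq (fun k => push (hf k)) n nu) A =
  proj1_sig nu (fun x => A (comp_seq f n x)).
Proof. revert A. induction n as [|n IH]; intro A; simpl; [reflexivity | apply IH]. Qed.

Lemma borel_comp_seq (n : nat) {A : Base X -> Prop} :
  borel X A -> borel X (fun x => A (comp_seq f n x)).
Proof.
  revert A. induction n as [|n IH]; intros A hA; simpl; [exact hA|].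
  apply (IH (fun y => A (f (S n) y))), borel_preimage; auto.
Qed.

End Iterates.

Theorem mainTheorem4 (X : Metric_Space) (f : nat -> Base X -> Base X)
  (hf : forall n, mcontinuous X (f n)) (m : nat) :
  mcompact X -> (2 <= m)%nat ->
  weakly_mixing_order (@wstar_open X) (fun n => push (hf n)) m ->
  weakly_mixing_order (@mopen X) f m.
Proof.
  intros _ _ wm U V hUV.
  destruct (wm (fun i => heavy_on (U i)) (fun i => heavy_on (V i))) as [n [hn Hn]].
  { intros i hi. destruct (hUV i hi) as [oU [oV [[u Uu] [v Vv]]]].
    split; [|split; [|split]]; try apply wstar_open_heavy_on;
      eexists; apply heavy_on_dirac; eassumption. }
  exists n. split; [exact hn|]. intros i hi.
  destruct (Hn i hi) as [nu [nuU nuV]].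
  destruct (heavy_on_mass nuU) as [A [hA [AU mA]]].
  destruct (heavy_on_mass nuV) as [B [hB [BV mB]]].
  rewrite push_iter_apply in mB.
  destruct (borel_prob_gt_half_meet (proj2_sig nu) hA (borel_comp_seq hf n hB) mA mB)
    as [x [Ax Bx]].
  exists x. split; [apply AU | apply BV]; assumption.
Qed.
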